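(* Let two stochastic CA have the same set of states and explicit global functions $F_A$ and $F_B$. If $S_{F_A}=S_{F_B}$ then $N_{F_A}=N_{F_B}$.
   Context: A stochastic CA is $(Q,R,V,V',f)$ with $Q$ finite states, $R$ finite random symbols, $V=\{v_1,\dots,v_r\}$, $V'=\{v'_1,\dots,v'_{r'}\}$ finite subsets of $\mathbb{Z}$, $f:Q^r\times R^{r'}\to Q$; explicit global function $F(c,s)_z=f((c_{z+v_1},\dots,c_{z+v_r}),(s_{z+v'_1},\dots,s_{z+v'_{r'}}))$. The non-deterministic global function is $N_F(c)=\{F(c,s):s\in R^{\mathbb{Z}}\}$. The stochastic global function is $S_F(c)([u]_z)=\nu_R\{s:F(c,s)\in[u]_z\}$, where $\nu_R$ is the uniform Bernoulli measure on $R^{\mathbb{Z}}$ and $[u]_z=\{c:c_{z+x}=u_x,0\le x<|u|\}$. *)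

From mathcomp Require Import all_boot all_order all_algebra.
Set Implicit Arguments. Unset Strict Implicit. Unset Printing Implicit Defensive.
Import Order.TTheory GRing.Theory Num.Theory.

Definition config (A : Type) := int -> A.

(* V = (v_1,..,v_r), V' = (v'_1,..,v'_r') are lists of distinct integers (finite subsets
   of Z given with an enumeration), f : Q^r x R^r' -> Q. *)
Definition explicitF (Q R : Type) (r r' : nat) (V : r.-tuple int) (V' : r'.-tuple int)
    (f : r.-tuple Q -> r'.-tuple R -> Q) (c : config Q) (s : config R) : config Q :=
  fun z => f [tuple of map (fun v => c (z + v)%R) V] [tuple of map (fun v => s (z + v)%R) V'].

Definition NF (Q R : Type) (r r' : nat) (V : r.-tuple int) (V' : r'.-tuple int)
    (f : r.-tuple Q -> r'.-tuple R -> Q) (c : config Q) : config Q -> Prop :=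
  fun d => exists s : config R, explicitF V V' f c s = d.

Definition in_cyl (Q : eqType) (u : seq Q) (z : int) (d : config Q) : bool :=
  all (fun x : nat => d (z + x%:Z)%R == nth (d z) u x) (iota 0 (size u)).

(* Uniform Bernoulli measure nu_R of an event E ⊆ R^Z that only depends on the
   coordinates in the window [lo, lo + n): it is the proportion of the |R|^n words
   w in R^n whose extension (by an arbitrary fixed symbol r0 outside the window)
   lies in E. *)
Definition window_ext (R : Type) (r0 : R) (lo : int) (n : nat) (w : {ffun 'I_n -> R})
    : config R :=
  fun i => match insub (`|i - lo|%N) with
           | Some k => if (lo <= i)%R then w k else r0
           | None => r0
           end.

Definition nu_window (R : finType) (r0 : R) (lo : int) (n : nat)
    (E : config R -> bool) : rat :=
  (#|[set w : {ffun 'I_n -> R} | E (window_ext r0 lo w)]|%:R / (#|R| ^ n)%:R)%R.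

Definition radius (r' : nat) (V' : r'.-tuple int) : nat := \max_(v <- V') `|v|%N.

(* Stochastic global function evaluated on a cylinder:
   S_F(c)([u]_z) = nu_R { s : F(c,s) ∈ [u]_z }.  The event depends only on the
   coordinates of s in [z - M, z + |u| + M), M = max |v'|, so nu_window computes
   exactly its uniform Bernoulli measure. *)
Definition SF (Q : eqType) (R : finType) (r0 : R) (r r' : nat) (V : r.-tuple int)
    (V' : r'.-tuple int) (f : r.-tuple Q -> r'.-tuple R -> Q)
    (c : config Q) (u : seq Q) (z : int) : rat :=
  nu_window r0 (z - (radius V')%:Z)%R (size u + 2 * radius V')
    (fun s => in_cyl u z (explicitF V V' f c s)).

From mathcomp Require Import all_boot all_order all_algebra.
From mathcomp Require Import zify.
From Stdlib Require Import Classical ClassicalEpsilon FunctionalExtensionality PropExtensionality.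
Import Order.TTheory GRing.Theory Num.Theory.
Set Implicit Arguments. Unset Strict Implicit.

(* The event [F(c,s) ∈ [u]_z] depends on finitely many coordinates of [s], and
   every word on them has positive weight, so [S_F(c)([u]_z) <> 0] exactly when
   some random input produces [u] at [z]: the stochastic global function
   determines which finite patterns are reachable.  Since [R^Z] is compact for
   finite [R] (König's lemma), [d ∈ N_F(c)] as soon as every central window of
   [d] is reachable, so [N_F] is determined by [S_F]. *)

Section Compactness.
Variables (R : finType) (r0 : R).

Definition agree_on (k : nat) (s p : config R) :=
  forall i : int, (absz i < k)%N -> s i = p i.

Variables (A : nat -> config R -> Prop) (width : nat -> nat).
Hypothesis A_local : forall n s p, agree_on (width n) s p -> A n s -> A n p.
Hypothesis A_antitone : forall m n s, (n <= m)%N -> A m s -> A n s.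
Hypothesis A_nonempty : forall n, exists s, A n s.

Definition extendable (k : nat) (p : config R) :=
  forall n, exists s, agree_on k s p /\ A n s.

Lemma extendable_step k p :
  extendable k p -> exists q, agree_on k q p /\ extendable k.+1 q.
Proof.
move=> ext_p; apply: NNPP => no_q.
pose upd (ab : R * R) := fun i : int =>
  if i == Posz k then ab.1 else if i == (- Posz k)%R then ab.2 else p i.
(* Each of the finitely many choices of the two new coordinates fails at some level. *)
have fails ab : exists n, ~ exists s, agree_on k.+1 s (upd ab) /\ A n s.
  apply: not_all_ex_not => ext_upd; apply: no_q; exists (upd ab); split=> //.
  by move=> i ik; rewrite /upd; do 2![case: eqP => [ei|_]; first by rewrite ei in ik; lia].
pose g ab := proj1_sig (constructive_indefinite_description _ (fails ab)).
have g_fails ab : ~ exists s, agree_on k.+1 s (upd ab) /\ A (g ab) s.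
  exact: proj2_sig (constructive_indefinite_description _ (fails ab)).
have [s [s_p As]] := ext_p (\max_(ab : R * R) g ab)%N.
pose ab := (s (Posz k), s (- Posz k)%R).
apply: (g_fails ab); exists s; split.
  move=> i ik; rewrite /upd /=.
  by case: eqP => [->|ik'] //; case: eqP => [->|ik''] //; apply: s_p; lia.
exact: A_antitone (@leq_bigmax _ g ab) As.
Qed.

Definition extend (k : nat) (p : config R) : config R :=
  epsilon (inhabits p) (fun q => agree_on k q p /\ extendable k.+1 q).

Fixpoint branch (k : nat) : config R :=
  if k is k'.+1 then extend k' (branch k') else fun _ => r0.

Lemma branch_spec k :
  extendable k (branch k) /\ agree_on k (branch k.+1) (branch k).
Proof.
have ext_branch : extendable k (branch k).
  elim: k => [|k IH] /=.
    by move=> n; have [s As] := A_nonempty n; exists s; split=> // i; lia.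
  by have [] := epsilon_spec (inhabits (branch k)) _ (extendable_step IH).
by have [] := epsilon_spec (inhabits (branch k)) _ (extendable_step ext_branch).
Qed.

Lemma branch_agree k m : (k <= m)%N -> agree_on k (branch m) (branch k).
Proof.
elim: m => [|m IH]; first by rewrite leqn0 => /eqP->.
rewrite leq_eqVlt => /orP[/eqP->//|km] i ik.
by rewrite (proj2 (branch_spec m)) ?IH //; lia.
Qed.

Definition branch_limit : config R := fun i => branch (absz i).+1 i.

Lemma branch_limit_agree k : agree_on k branch_limit (branch k).
Proof. by move=> i ik; rewrite /branch_limit -(@branch_agree (absz i).+1 k) //; lia. Qed.

Lemma compact_intersection : exists s, forall n, A n s.
Proof.
exists branch_limit => n.
have [s [s_branch As]] := (proj1 (branch_spec (width n))) n.
by apply: A_local As => i ik; rewrite (@branch_limit_agree (width n)) // s_branch.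
Qed.

End Compactness.

Section Realisability.
Variables (Q : Type) (R : finType) (r r' : nat) (V : r.-tuple int)
  (V' : r'.-tuple int) (f : r.-tuple Q -> r'.-tuple R -> Q).

Lemma explicitF_local c s s' z :
  {in (V' : seq int), forall v, s (z + v)%R = s' (z + v)%R} ->
  explicitF V V' f c s z = explicitF V V' f c s' z.
Proof. by move=> ss'; congr (f _ _); apply: val_inj; apply/eq_in_map. Qed.

Lemma radius_ge v : v \in (V' : seq int) -> (absz v <= radius V')%N.
Proof. by move=> vV; apply: (@leq_bigmax_seq _ _ xpredT (fun v : int => absz v)). Qed.

Definition realises_on (c d : config Q) (n : nat) (s : config R) :=
  forall z : int, (absz z < n)%N -> explicitF V V' f c s z = d z.

Lemma NF_realisableP (r0 : R) c d :
  NF V V' f c d <-> forall n, exists s, realises_on c d n s.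
Proof.
split=> [[s <-] n|realisable]; first by exists s.
have [|n m s|//|s real_s] :=
  @compact_intersection _ r0 (realises_on c d) (fun n => n + radius V')%N.
- move=> n s p sp real_s z zn; rewrite -real_s //.
  by apply/esym/explicitF_local => v /radius_ge vV; apply: sp; lia.
- by move=> nm real_s z zn; apply: real_s; lia.
by exists s; apply: functional_extensionality => z; apply: (real_s (absz z).+1).
Qed.

End Realisability.

Section Cylinders.
Variable Q : eqType.

Lemma in_cylP (u : seq Q) z e :
  reflect (forall x, (x < size u)%N -> e (z + Posz x)%R = nth (e z) u x)
          (in_cyl u z e).
Proof.
apply: (iffP allP) => [cyl x xu|cyl x].
  by apply/eqP/cyl; rewrite mem_iota.
by rewrite mem_iota => /andP[_ xu]; apply/eqP/cyl.
Qed.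

Lemma eq_in_cyl (u : seq Q) z e e' :
  (forall x, (x < size u)%N -> e (z + Posz x)%R = e' (z + Posz x)%R) ->
  in_cyl u z e = in_cyl u z e'.
Proof.
move=> ee'; apply: eq_in_all => x; rewrite mem_iota => /andP[_ xu].
by rewrite ee' // (set_nth_default (e' z)).
Qed.

Definition central_word (d : config Q) (n : nat) : seq Q :=
  mkseq (fun x => d (- Posz n + Posz x)%R) (n + n).

Lemma central_word_cylP (d e : config Q) n :
  reflect (forall x, (x < n + n)%N -> e (- Posz n + Posz x)%R = d (- Posz n + Posz x)%R)
          (in_cyl (central_word d n) (- Posz n) e).
Proof.
apply: (iffP (in_cylP _ _ _)); rewrite size_mkseq => cyl x xn;
  by have := cyl x xn; rewrite nth_mkseq.
Qed.

Variables (R : finType) (r r' : nat) (V : r.-tuple int)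
  (V' : r'.-tuple int) (f : r.-tuple Q -> r'.-tuple R -> Q).

Lemma NF_central_cylinders (r0 : R) c d :
  NF V V' f c d <->
  forall n, exists s, in_cyl (central_word d n) (- Posz n) (explicitF V V' f c s).
Proof.
rewrite (NF_realisableP V V' f r0); split=> reach n.
  have [s real_s] := reach n.+1; exists s.
  by apply/central_word_cylP => x xn; apply: real_s; lia.
have [s /central_word_cylP cyl] := reach n; exists s => z zn.
have zn' : (absz (z + Posz n)%R < n + n)%N by lia.
by have := cyl _ zn'; have -> : (- Posz n + Posz (absz (z + Posz n)%R))%R = z by lia.
Qed.

Lemma window_ext_agree (r0 : R) lo N (s : config R) (i : int) :
  (lo <= i < lo + Posz N)%R -> window_ext r0 lo [ffun k : 'I_N => s (lo + Posz k)%R] i = s i.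
Proof.
move=> /andP[loi iN]; rewrite /window_ext.
case: insubP => [k _ ek|]; last by move/negP; case; lia.
by rewrite loi ffunE ek; congr s; lia.
Qed.

Lemma SF_neq0P (r0 : R) c u z :
  SF r0 V V' f c u z != 0%R <-> exists s, in_cyl u z (explicitF V V' f c s).
Proof.
rewrite /SF /nu_window; set lo := (z - _)%R; set N := (size u + _)%N.
have card_pos : (#|R| ^ N)%N != 0%N.
  by rewrite expn_eq0 negb_and -lt0n; apply/orP; left; apply/card_gt0P; exists r0.
rewrite mulf_eq0 invr_eq0 !pnatr_eq0 negb_or (negbTE card_pos) andbT -lt0n card_gt0.
split=> [/set0Pn[w]|[s cyl]]; first by rewrite inE; exists (window_ext r0 lo w).
apply/set0Pn; exists [ffun k : 'I_N => s (lo + Posz k)%R]; rewrite inE /=.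
apply: etrans cyl; apply: eq_in_cyl => x xu; apply: explicitF_local => v /radius_ge vV.
by apply: window_ext_agree; rewrite /lo /N; lia.
Qed.

Lemma NF_SF (r0 : R) c d :
  NF V V' f c d <-> forall n, SF r0 V V' f c (central_word d n) (- Posz n) != 0%R.
Proof.
rewrite (NF_central_cylinders r0).
by split=> reach n; apply/(SF_neq0P r0); move: (reach n) => /(SF_neq0P r0).
Qed.

End Cylinders.

Theorem fact2 (Q : finType)
    (RA : finType) (rA0 : RA) (rA rA' : nat) (VA : rA.-tuple int) (VA' : rA'.-tuple int)
    (fA : rA.-tuple Q -> rA'.-tuple RA -> Q)
    (RB : finType) (rB0 : RB) (rB rB' : nat) (VB : rB.-tuple int) (VB' : rB'.-tuple int)
    (fB : rB.-tuple Q -> rB'.-tuple RB -> Q) :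
  uniq VA -> uniq VA' -> uniq VB -> uniq VB' ->
  (forall (c : config Q) (u : seq Q) (z : int),
      SF rA0 VA VA' fA c u z = SF rB0 VB VB' fB c u z) ->
  forall c : config Q, NF VA VA' fA c = NF VB VB' fB c.
Proof.
move=> _ _ _ _ eq_SF c; apply: functional_extensionality => d.
apply: propositional_extensionality.
rewrite (NF_SF VA VA' fA rA0) (NF_SF VB VB' fB rB0).
by split=> reach n; rewrite ?eq_SF // -?eq_SF.
Qed.
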